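(* Consider the discrete-time nonlinear system $x^+=AM(x)+Bu$ with (unknown) $A\in\mathbb{R}^{n\times N}$, $B\in\mathbb{R}^{n\times m}$, $M(x)=\begin{bmatrix}x\\ \mathcal{Z}(x)\end{bmatrix}\in\mathbb{R}^N$, $\mathcal{Z}:\mathbb{R}^n\to\mathbb{R}^{N-n}$, state set $X\subset\mathbb{R}^n$, initial set $X_{\mathcal I}\subset X$ and unsafe set $X_{\mathcal U}\subset X$. Let $\mathcal{U}_0=[u(0),\dots,u(T-1)]$, $\mathcal{X}_1=[x(1),\dots,x(T)]$ and $\mathcal{M}_0=[M(x(0)),\dots,M(x(T-1))]$ be built from a single trajectory $x(t+1)=AM(x(t))+Bu(t)$, with $\mathcal{M}_0$ of full row rank, and let $Q=[Q_1~Q_2]\in\mathbb{R}^{T\times N}$ ($Q_1\in\mathbb{R}^{T\times n}$, $Q_2\in\mathbb{R}^{T\times(N-n)}$) satisfy $\mathcal{M}_0Q=\mathbb{I}_N$ and $\mathcal{X}_1Q_2=\mathbf{0}_{n\times(N-n)}$. Suppose there exist a symmetric positive-definite $P\in\mathbb{R}^{n\times n}$, $k\in\mathbb{N}_{>0}$, and $\gamma,\lambda,\epsilon\in\mathbb{R}_{\ge0}$ with $\lambda>\gamma+(k-1)\epsilon$ such that (i) $x^\top Px\le\gamma$ for all $x\in X_{\mathcal I}$; (ii) $x^\top Px\ge\lambda$ for all $x\in X_{\mathcal U}$; (iii) $x^\top Q_1^\top\mathcal{X}_1^\top P\mathcal{X}_1Q_1x\le x^\top Px+\epsilon$ for all $x\in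 X$; (iv) $((\mathcal{X}_1Q_1)^k)^\top P(\mathcal{X}_1Q_1)^k\preceq P$. Then $\mathcal{B}(x)=x^\top Px$ is a $k$-inductive control barrier certificate and $u=\mathcal{U}_0QM(x)$ a corresponding safety controller; that is, $\mathcal{B}\le\gamma$ on $X_{\mathcal I}$, $\mathcal{B}\ge\lambda$ on $X_{\mathcal U}$, and for all $x\in X$, with $x^+=AM(x)+B\,\mathcal{U}_0QM(x)$ and $x^{k+}$ the state after $k$ steps of this closed loop, $\mathcal{B}(x^+)\le\mathcal{B}(x)+\epsilon$ and $\mathcal{B}(x^{k+})\le\mathcal{B}(x)$.
   Context: $\preceq$ is the Loewner order. A function $\mathcal{B}:X\to\mathbb{R}_{\ge0}$ is a $k$-inductive control barrier certificate ($k$-CBC) if there are $k\in\mathbb{N}_{>0}$, $\gamma,\lambda,\epsilon\ge0$ with $\lambda>\gamma+(k-1)\epsilon$ such that $\mathcal{B}\le\gamma$ on $X_{\mathcal I}$, $\mathcal{B}\ge\lambda$ on $X_{\mathcal U}$, and for all $x\in X$ there is an input with $\mathcal{B}(x^+)\le\mathcal{B}(x)+\epsilon$ and $\mathcal{B}(x^{k+})\le\mathcal{B}(x)$, $x^{k+}$ being the state after $k$ steps; a feedback realizing these is a safety controller. *)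

From mathcomp Require Import all_boot all_order all_algebra.
Set Implicit Arguments. Unset Strict Implicit. Unset Printing Implicit Defensive.
Import Order.TTheory GRing.Theory Num.Theory.
Local Open Scope ring_scope.

Definition qform (R : numDomainType) (n : nat) (P : 'M[R]_n) (x : 'cV[R]_n) : R :=
  (x^T *m P *m x) 0 0.

Definition pos_def (R : numDomainType) (n : nat) (P : 'M[R]_n) : Prop :=
  P^T = P /\ forall x : 'cV[R]_n, x != 0 -> 0 < qform P x.

Definition loewner_le (R : numDomainType) (n : nat) (S T : 'M[R]_n) : Prop :=
  forall v : 'cV[R]_n, qform S v <= qform T v.

Definition full_row_rank (R : fieldType) (r c : nat) (A : 'M[R]_(r, c)) : Prop :=
  \rank A = r.

(* B is a k-inductive CBC for the closed loop x+ = f x (f realizes the safety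
   controller), with parameters k, gamma, lambda, eps. *)
Definition kCBC_with_controller (R : numDomainType) (S : Type)
  (X XI XU : S -> Prop) (f : S -> S) (Bc : S -> R)
  (k : nat) (gamma lambda eps : R) : Prop :=
  ((0 < k)%N /\ 0 <= gamma /\ 0 <= lambda /\ 0 <= eps /\
   gamma + (k.-1)%:R * eps < lambda) /\
  (forall x, X x -> 0 <= Bc x) /\
  (forall x, XI x -> Bc x <= gamma) /\
  (forall x, XU x -> lambda <= Bc x) /\
  (forall x, X x -> Bc (f x) <= Bc x + eps /\ Bc (iter k f x) <= Bc x).

From mathcomp Require Import all_boot all_order all_algebra.
Import Order.TTheory GRing.Theory Num.Theory.
Local Open Scope ring_scope.

(* Proof: the trajectory gives the data identity X1 = A M0 + B U0, so with
   M0 Q = I the closed loop x |-> A M(x) + B U0 Q M(x) equals X1 Q M(x); since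
   X1 Q2 = 0 only the block Q1 acting on x survives and the closed loop is the
   linear map x |-> X1 Q1 x.  Its one-step and k-step images turn B(x+) and
   B(x^{k+}) into the quadratic forms of (X1 Q1)^T P (X1 Q1) and of
   ((X1 Q1)^k)^T P (X1 Q1)^k, which are bounded by (iii) and (iv). *)

Section QuadraticForm.

Variables (R : numDomainType) (n : nat).

Lemma qform_mulmx (P L : 'M[R]_n) (x : 'cV[R]_n) :
  qform P (L *m x) = qform (L^T *m P *m L) x.
Proof. by rewrite /qform trmx_mul !mulmxA. Qed.

Lemma pos_def_qform_ge0 (P : 'M[R]_n) (x : 'cV[R]_n) :
  pos_def P -> 0 <= qform P x.
Proof.
move=> [_ P_pos]; have [->|x_neq0] := eqVneq x 0.
  by rewrite /qform mulmx0 mxE.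
exact/ltW/P_pos.
Qed.

End QuadraticForm.

Lemma iter_linear {R : pzRingType} {n : nat} {L : 'M[R]_n}
    {f : 'cV[R]_n -> 'cV[R]_n} :
  (forall x, f x = L *m x) -> forall j x, iter j f x = L ^+ j *m x.
Proof.
move=> fE; elim=> [|j IHj] x /=; first by rewrite expr0 mul1mx.
by rewrite IHj fE exprS mulmxA.
Qed.

Definition colsmx {R : Type} {r T : nat} (v : 'I_T -> 'cV[R]_r) : 'M[R]_(r, T) :=
  \matrix_(i < r, j < T) v j i 0.

Lemma colsmx_affine (R : pzRingType) (r a b T : nat)
    (A : 'M[R]_(r, a)) (B : 'M[R]_(r, b))
    (y : 'I_T -> 'cV[R]_r) (v : 'I_T -> 'cV[R]_a) (w : 'I_T -> 'cV[R]_b) :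
  (forall j, y j = A *m v j + B *m w j) ->
  colsmx y = A *m colsmx v + B *m colsmx w.
Proof.
move=> yE; apply/matrixP => i j; rewrite !mxE yE !mxE.
by congr (_ + _); apply: eq_bigr => l _; rewrite !mxE.
Qed.

Lemma data_driven_closed_loop (R : pzRingType) (n p m T : nat)
    (A : 'M[R]_(n, n + p)) (B : 'M[R]_(n, m)) (M0 : 'M[R]_(n + p, T))
    (U0 : 'M[R]_(m, T)) (X1 : 'M[R]_(n, T)) (Q : 'M[R]_(T, n + p))
    (x : 'cV[R]_n) (z : 'cV[R]_p) :
  X1 = A *m M0 + B *m U0 -> M0 *m Q = 1%:M -> X1 *m rsubmx Q = 0 ->
  A *m col_mx x z + B *m (U0 *m Q *m col_mx x z) = X1 *m lsubmx Q *m x.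
Proof.
move=> X1E M0Q X1Q2.
have -> : A = A *m M0 *m Q by rewrite -mulmxA M0Q mulmx1.
rewrite !mulmxA -!mulmxDl -X1E -mulmxA -{1}(hsubmxK Q) mul_row_col.
by rewrite mulmxDr !mulmxA X1Q2 mul0mx addr0.
Qed.

(* N = n + p, Z : R^n -> R^p, M(x) = col_mx x (Z x). *)
Theorem theorem3 (R : realFieldType) (n p m T : nat)
  (A : 'M[R]_(n, n + p)) (B : 'M[R]_(n, m)) (Z : 'cV[R]_n -> 'cV[R]_p)
  (X XI XU : 'cV[R]_n -> Prop)
  (hXI : forall x, XI x -> X x) (hXU : forall x, XU x -> X x)
  (xs : nat -> 'cV[R]_n) (us : nat -> 'cV[R]_m)
  (htraj : forall t, (t < T)%N -> xs t.+1 = A *m col_mx (xs t) (Z (xs t)) + B *m us t)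
  (Q : 'M[R]_(T, n + p))
  (hrank : full_row_rank (\matrix_(i < n + p, j < T) (col_mx (xs j) (Z (xs j))) i 0))
  (hQ : (\matrix_(i < n + p, j < T) (col_mx (xs j) (Z (xs j))) i 0) *m Q = 1%:M)
  (hQ2 : (\matrix_(i < n, j < T) xs j.+1 i 0) *m rsubmx Q = 0)
  (P : 'M[R]_n) (hP : pos_def P) (k : nat) (hk : (0 < k)%N)
  (gamma lambda eps : R) (hg : 0 <= gamma) (hl : 0 <= lambda) (he : 0 <= eps)
  (hlam : gamma + (k.-1)%:R * eps < lambda)
  (h1 : forall x, XI x -> qform P x <= gamma)
  (h2 : forall x, XU x -> lambda <= qform P x)
  (h3 : forall x, X x ->
     qform (((\matrix_(i < n, j < T) xs j.+1 i 0) *m lsubmx Q)^T *m P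
             *m ((\matrix_(i < n, j < T) xs j.+1 i 0) *m lsubmx Q)) x
     <= qform P x + eps)
  (h4 : loewner_le
     ((((\matrix_(i < n, j < T) xs j.+1 i 0) *m lsubmx Q) ^+ k)^T *m P
        *m (((\matrix_(i < n, j < T) xs j.+1 i 0) *m lsubmx Q) ^+ k)) P) :
  kCBC_with_controller X XI XU
    (fun x => A *m col_mx x (Z x)
              + B *m ((\matrix_(i < m, j < T) us j i 0) *m Q *m col_mx x (Z x)))
    (qform P) k gamma lambda eps.
Proof.
set L := _ *m lsubmx Q in h3 h4.
set f := fun x => _.
have X1E : colsmx (fun j : 'I_T => xs j.+1) =
    A *m colsmx (fun j : 'I_T => col_mx (xs j) (Z (xs j)))
    + B *m colsmx (fun j : 'I_T => us j).
  by apply: colsmx_affine => j; rewrite htraj.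
have fE x : f x = L *m x by exact: data_driven_closed_loop X1E hQ hQ2.
split; first by do !split.
split=> [x _|]; first exact: pos_def_qform_ge0.
do 2 split=> //; move=> x Xx; split.
- by rewrite fE qform_mulmx; exact: h3.
- by rewrite (iter_linear fE) qform_mulmx; exact: h4.
Qed.
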